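(* Assume the setting in the context (in particular Assumption (A)). Let $\rho>0$, $z_0\in V_f(\rho)$ and $\epsilon>0$, and run Algorithm $\mathcal{A}_*$ from $z_0$ with accuracy $\epsilon$, producing $z_j$, $s_j$, $n_j$, $m_j$ and $j_{out}$. Then: (i) for every $j\in\{0,\dots,j_{out}\}$ we have $z_j\in V_f(\rho)$, and the conclusions of the guarantee for $\mathcal{A}_d$ hold with $r=z_j$, $n=n_j$, $z=z_{j+1}$, $m=m_{j+1}$; namely $f(z_{j+1})\leq f(z_j)-\frac{1}{2L_f}\|g(z_j)\|_*^2$, $f(z_{j+1})-f^*\leq\left(\frac{\bar n_\rho}{m_{j+1}+1}\right)^2(f(z_j)-f^* )$, and $n_j\in(0,\lceil4\bar n_\rho\rceil]\Rightarrow m_{j+1}\in[n_j,\lceil4\bar n_\rho\rceil]$; (ii) the sequence $\{m_j\}$ is non-decreasing; in particular $m_j\leq n_j\leq m_{j+1}$ for all $j\in\{0,\dots,j_{out}\}$; (iii) $s_j\in(0,1]$ for all $j\in\{2,\dots,j_{out}\}$.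
   Context: Let $f:\mathbb{R}^n\to(-\infty,\infty]$ be a proper closed convex function such that the problem $f^*=\min_{x\in\mathbb{R}^n}f(x)$ is solvable. Let $\Omega_f=\{x: f(x)=f^*\}$, fix a norm $\|\cdot\|$ on $\mathbb{R}^n$ with dual norm $\|y\|_*=\sup\{y^Tz:\|z\|\leq 1\}$, and for $x\in\mathbb{R}^n$ let $\bar x=\arg\min_{z\in\Omega_f}\|x-z\|$. For $\rho\geq0$ let $V_f(\rho)=\{x: f(x)-f^*\leq\rho\}$. Let $\mathcal{A}$ be an iterative algorithm: for $x_0\in\mathrm{dom} f$ and integer $k\geq1$, $\mathcal{A}(x_0,k)$ denotes its $k$-th iterate started from $x_0$ (and $\mathcal{A}(x_0,0)=x_0$). Assumption (A): (i) for every $\rho>0$ there is $\mu_\rho>0$ with $f(x_0)-f^*\geq\frac{\mu_\rho}{2}\|x_0-\bar x_0\|^2$ for all $x_0\in V_f(\rho)$; (ii) there exist $a_f>0$, $L_f>0$ and $g:\mathbb{R}^n\to\mathbb{R}^n$ with $g(x)=0\iff x\in\Omega_f$ such that for every $x_0\in\mathrm{dom} f$: $f(\mathcal{A}(x_0,1))\leq f(x_0)-\frac{1}{2L_f}\|g(x_0)\|_*^2$ and $f(\mathcal{A}(x_0,k))-f^*\leq\frac{a_f}{(k+1)^2}\|x_0-\bar x_0\|^2$ for all $k\geq1$; (iii) $\bar n_\rho:=\max\{\frac12,\sqrt{2a_f/\mu_\rho}\}$. Procedure $\mathcal{A}_d(r,n)$ (input $r\in\mathrm{dom} f$, $n\in\mathbb{R}$):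 set $x_0=r$, $k=0$. Repeat: $k\gets k+1$; set $x_k=\mathcal{A}(x_0,k)$ if $f(\mathcal{A}(x_0,k))\leq f(x_{k-1})$, and $x_k=x_{k-1}$ otherwise; $\ell=\lfloor k/2\rfloor$; until $k\geq n$ and $f(x_\ell)-f(x_k)\leq\frac13(f(x_0)-f(x_\ell))$. Output $z=x_k$, $m=k$. Algorithm $\mathcal{A}_*(z_0)$ (input $z_0\in\mathrm{dom} f$, $\epsilon>0$): set $m_0=1$, $m_{-1}=1$, $j=-1$. Repeat: $j\gets j+1$; $s_j=\sqrt{\frac{f(z_{j-1})-f(z_j)}{f(z_{j-2})-f(z_j)}}$ if $j\geq2$ and $s_j=0$ otherwise; $n_j=\max\{m_j,4s_jm_{j-1}\}$; $[z_{j+1},m_{j+1}]=\mathcal{A}_d(z_j,n_j)$; until $f(z_j)-f(z_{j+1})\leq\epsilon$. Output $z_{out}=z_{j+1}$, $j_{out}=j$. *)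

From HB Require Import structures.
From mathcomp Require Import all_boot all_order all_algebra.
From mathcomp Require Import all_classical all_reals all_analysis.
Set Implicit Arguments. Unset Strict Implicit. Unset Printing Implicit Defensive.
Import Order.TTheory GRing.Theory Num.Theory.
Import numFieldNormedType.Exports.
Local Open Scope classical_set_scope.
Local Open Scope ring_scope.

Section Defs.
Variables (R : realType) (n : nat).
Local Notation vec := 'rV[R]_n.

Definition dotp (y z : vec) : R := \sum_(i < n) y 0 i * z 0 i.

Definition is_norm (N : vec -> R) : Prop :=
  [/\ forall x, 0 <= N x,
      forall x, N x = 0 -> x = 0,
      forall (a : R) x, N (a *: x) = `|a| * N x &
      forall x y, N (x + y) <= N x + N y].

Definition dualnorm (N : vec -> R) (y : vec) : R :=
  sup [set r | exists z, N z <= 1 /\ r = dotp y z].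

Definition proper_fun (f : vec -> \bar R) : Prop :=
  (forall x, f x != -oo%E) /\ (exists x, (f x < +oo)%E).

Definition closed_fun (f : vec -> \bar R) : Prop :=
  forall a : R, closed [set x | (f x <= a%:E)%E].

Definition convex_fun (f : vec -> \bar R) : Prop :=
  forall (x y : vec) (t : R), 0 < t < 1 ->
    (f (t *: x + (1 - t) *: y)%R <= t%:E * f x + (1 - t)%:E * f y)%E.

(* real value of f (used only at points of dom f) *)
Definition fr (f : vec -> \bar R) (x : vec) : R := fine (f x).

Fixpoint Ad_x (f : vec -> \bar R) (A : vec -> nat -> vec) (r : vec) (k : nat)
  : vec :=
  match k with
  | 0 => r
  | k'.+1 => let xprev := Ad_x f A r k' in
             if (f (A r k'.+1) <= f xprev)%E then A r k'.+1 else xprev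
  end.

Definition Ad_stop (f : vec -> \bar R) (A : vec -> nat -> vec) (r : vec)
  (nn : R) (k : nat) : Prop :=
  let x := Ad_x f A r in
  nn <= k%:R /\
  fr f (x k./2) - fr f (x k) <= 3^-1 * (fr f (x 0) - fr f (x k./2)).

Definition Ad_out (f : vec -> \bar R) (A : vec -> nat -> vec) (r : vec)
  (nn : R) (z : vec) (m : nat) : Prop :=
  (1 <= m)%N /\ Ad_stop f A r nn m /\
  (forall k, (1 <= k < m)%N -> ~ Ad_stop f A r nn k) /\
  z = Ad_x f A r m.

(* ---- Algorithm A_*(z0) with accuracy eps ----
   A terminating run: sequences z, m (indices 0..jout+1), s, nn (indices
   0..jout) and the output index jout.  m_{-1} = 1 = m_0, so m_{j-1} is
   written m j.-1. *)
Definition Astar_run (f : vec -> \bar R) (A : vec -> nat -> vec) (z0 : vec)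
  (eps : R) (z : nat -> vec) (m : nat -> nat) (s nn : nat -> R) (jout : nat)
  : Prop :=
  [/\ z 0%N = z0, m 0%N = 1%N,
      forall j, (j <= jout)%N ->
        s j = (if (2 <= j)%N then
                 Num.sqrt ((fr f (z j.-1) - fr f (z j)) /
                           (fr f (z j.-2) - fr f (z j)))
               else 0)
        /\ nn j = Num.max (m j)%:R (4 * s j * (m j.-1)%:R)
        /\ Ad_out f A (z j) (nn j) (z j.+1) (m j.+1),
      forall j, (j < jout)%N -> eps < fr f (z j) - fr f (z j.+1) &
      fr f (z jout) - fr f (z jout.+1) <= eps].

End Defs.

From HB Require Import structures.
From mathcomp Require Import all_boot all_order all_algebra.
From mathcomp Require Import all_classical all_reals all_analysis.
From mathcomp Require Import ring lra zify.
Set Implicit Arguments. Unset Strict Implicit. Unset Printing Implicit Defensive.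
Import Order.TTheory GRing.Theory Num.Theory.
Local Open Scope ring_scope.

(* Started at a point r of the sublevel set V_f(rho), the iterate x_k of A_d
   is never worse than A(r, k), so the O(1/k^2) rate of A combined with the
   quadratic growth (A)(i) bounds f(x_k) - fstar by (nbar/(k+1))^2 times the
   gap f(r) - fstar.  Once k >= 4 nbar, the iterate x_{k/2} has therefore
   closed at least 3/4 of that gap, which is exactly what the stopping test
   of A_d asks for; so A_d stops by ceil(4 nbar).  Since A_d never increases
   f, all restart points z_j stay in V_f(rho), and since every decrease
   f(z_{j-1}) - f(z_j) before termination exceeds eps > 0, the ratio under
   the square root defining s_j lies in (0, 1]. *)

Lemma sqr_max_sqrt_ge (R : rcfType) (a c : R) :
  0 <= c -> c <= Num.max a (Num.sqrt c) ^+ 2.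
Proof.
move=> c_ge0; have sqrt_ge0 := sqrtr_ge0 c.
have sqrt_le : Num.sqrt c <= Num.max a (Num.sqrt c) by rewrite le_max lexx orbT.
rewrite -{1}(sqr_sqrtr c_ge0); nra.
Qed.

Lemma sqrt_ratio_gt0_le1 (R : rcfType) (a b c : R) :
  c < b -> b <= a -> 0 < Num.sqrt ((b - c) / (a - c)) <= 1.
Proof.
move=> cb ba; have ac : 0 < a - c by lra.
have bc : 0 < b - c by lra.
rewrite sqrtr_gt0 divr_gt0 //= -[X in _ <= X]sqrtr1 ler_sqrt // ler_pdivrMr // mul1r; lra.
Qed.

Lemma growth_rate_le (R : realFieldType) (mu af K q nb fs a d c : R) :
  0 < mu -> 0 < af -> 0 < K -> 0 <= q -> 2 * af / mu <= nb ^+ 2 ->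
  mu / 2 * q <= a - fs -> d - fs <= af / K ^+ 2 * q -> c <= d ->
  c - fs <= (nb / K) ^+ 2 * (a - fs).
Proof.
move=> mu_gt0 af_gt0 K_gt0 q_ge0 nb_ge growth rate cd.
have K2_gt0 : 0 < K ^+ 2 by rewrite exprn_gt0.
have gap_ge0 : 0 <= a - fs by nra.
have q_le : q <= 2 / mu * (a - fs).
  rewrite -(ler_pM2l (_ : 0 < mu / 2)) ?divr_gt0 //.
  by have -> : mu / 2 * (2 / mu * (a - fs)) = a - fs by field; exact: lt0r_neq0.
have rate' : d - fs <= 2 * af / mu / K ^+ 2 * (a - fs).
  have -> : 2 * af / mu / K ^+ 2 * (a - fs) = af / K ^+ 2 * (2 / mu * (a - fs)).
    by field; rewrite !lt0r_neq0.
  exact: le_trans rate (ler_wpM2l (divr_ge0 (ltW af_gt0) (ltW K2_gt0)) q_le).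
have coef_le : 2 * af / mu / K ^+ 2 <= (nb / K) ^+ 2.
  by rewrite expr_div_n ler_wpM2r // invr_ge0 ltW.
have := ler_wpM2r gap_ge0 coef_le; lra.
Qed.

Lemma EFin_fine_sublevel (R : numDomainType) (a c : R) (y : \bar R) :
  (a%:E <= y)%E -> (y - a%:E <= c%:E)%E -> y = (fine y)%:E.
Proof. by case: y. Qed.

Section AdIterates.
Variables (R : realType) (n : nat) (f : 'rV[R]_n -> \bar R).
Variables (A : 'rV[R]_n -> nat -> 'rV[R]_n) (r : 'rV[R]_n).
Local Notation x := (Ad_x f A r).

Lemma Ad_x_leS k : (f (x k.+1) <= f (x k))%E.
Proof. by rewrite /=; case: ifP. Qed.

Lemma Ad_x_le_A k : (f (x k.+1) <= f (A r k.+1))%E.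
Proof. by rewrite /=; case: ifP => // /negbT; rewrite -ltNge => /ltW. Qed.

Lemma Ad_x_nonincreasing k k' : (k <= k')%N -> (f (x k') <= f (x k))%E.
Proof.
apply: (homo_leq (f := fun k => f (x k)) (r := fun a b => (b <= a)%E)).
- exact: lexx.
- by move=> ? ? ? h1 h2; exact: le_trans h2 h1.
- exact: Ad_x_leS.
Qed.

Lemma Ad_out_le_start nn z m : Ad_out f A r nn z m -> (f z <= f r)%E.
Proof. by case=> _ [_ [_ ->]]; exact: (Ad_x_nonincreasing (leq0n m)). Qed.

End AdIterates.

Section AdGuarantee.
Variables (R : realType) (n : nat) (f : 'rV[R]_n -> \bar R) (N : 'rV[R]_n -> R).
Variables (fstar : R) (xbar : 'rV[R]_n -> 'rV[R]_n).
Variables (A : 'rV[R]_n -> nat -> 'rV[R]_n) (mu : R -> R) (af Lf : R).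
Variables (g : 'rV[R]_n -> 'rV[R]_n) (rho : R).

Hypothesis fstar_le : forall x, (fstar%:E <= f x)%E.
Hypothesis quadratic_growth : forall r, 0 < r -> 0 < mu r /\
  forall x, (f x - fstar%:E <= r%:E)%E ->
    ((mu r / 2 * N (x - xbar x) ^+ 2)%:E <= f x - fstar%:E)%E.
Hypothesis af_gt0 : 0 < af.
Hypothesis descent_rate : forall x, (f x < +oo)%E ->
  (f (A x 1%N) <= f x - ((2 * Lf)^-1 * dualnorm N (g x) ^+ 2)%:E)%E /\
  (forall k, (1 <= k)%N ->
     (f (A x k) - fstar%:E <= (af / (k%:R + 1) ^+ 2 * N (x - xbar x) ^+ 2)%:E)%E).
Hypothesis rho_gt0 : 0 < rho.

Let nbar := Num.max (2^-1) (Num.sqrt (2 * af / mu rho)).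

Lemma nbar_ge_half : 2^-1 <= nbar.
Proof. by rewrite le_max lexx. Qed.

Section Restart.
Variable r : 'rV[R]_n.
Hypothesis r_sublevel : (f r - fstar%:E <= rho%:E)%E.
Local Notation x := (Ad_x f A r).

Lemma Ad_x_sublevel k : (f (x k) - fstar%:E <= rho%:E)%E.
Proof.
apply: le_trans r_sublevel; apply: leeB (lexx _).
exact: (Ad_x_nonincreasing _ _ _ (leq0n k)).
Qed.

Lemma Ad_x_fine k : f (x k) = (fr f (x k))%:E.
Proof. exact: EFin_fine_sublevel (fstar_le _) (Ad_x_sublevel k). Qed.

Lemma start_fine : f r = (fr f r)%:E.
Proof. exact: Ad_x_fine 0. Qed.

Lemma start_lt_pinfty : (f r < +oo)%E.
Proof. by rewrite start_fine ltry. Qed.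

Lemma fr_Ad_x_nonincreasing k k' : (k <= k')%N -> fr f (x k') <= fr f (x k).
Proof. by move/(Ad_x_nonincreasing f A r); rewrite !Ad_x_fine lee_fin. Qed.

Lemma fstar_le_fr_Ad_x k : fstar <= fr f (x k).
Proof. by have := fstar_le (x k); rewrite Ad_x_fine lee_fin. Qed.

Lemma Ad_x_rate k : (1 <= k)%N ->
  fr f (x k) - fstar <= (nbar / (k%:R + 1)) ^+ 2 * (fr f r - fstar).
Proof.
move=> k_ge1; have [mu_gt0 growth] := quadratic_growth rho_gt0.
have [_ /(_ k k_ge1) rate] := descent_rate start_lt_pinfty.
have A_fine := EFin_fine_sublevel (fstar_le _) rate.
have x_le_A : fr f (x k) <= fr f (A r k).
  by have := Ad_x_le_A f A r k.-1; rewrite prednK // Ad_x_fine A_fine lee_fin.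
move: rate (growth r r_sublevel); rewrite A_fine start_fine -!EFinB !lee_fin.
move=> rate grow; apply: (growth_rate_le mu_gt0 af_gt0 _ (sqr_ge0 _) _ grow rate x_le_A).
  exact: ltr_wpDl (ler0n _ k) ltr01.
by apply: sqr_max_sqrt_ge; rewrite divr_ge0 ?mulr_ge0 ?ltW.
Qed.

Lemma Ad_stop_beyond nn k : 4 * nbar <= k%:R -> nn <= k%:R -> Ad_stop f A r nn k.
Proof.
move=> k_ge nn_le; split => //; set l := k./2.
have k_lt : (k%:R : R) < 2 * (l%:R + 1).
  have : (k < (l.+1).*2)%N by rewrite -ltn_half_double.
  by rewrite -(ltr_nat R) -muln2 natrM -natr1 mulrC.
have l_gt0 : (0 < l)%N.
  by rewrite -(ltr_nat R); have := nbar_ge_half; lra.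
have ratio_le : (nbar / (l%:R + 1)) ^+ 2 <= 4^-1.
  have l1_gt0 : (0 : R) < l%:R + 1 by rewrite ltr_wpDl.
  have : 0 <= nbar / (l%:R + 1) by rewrite divr_ge0 ?ltW //; have := nbar_ge_half; lra.
  have : nbar / (l%:R + 1) <= 2^-1 by rewrite ler_pdivrMr //; lra.
  nra.
have l_le : (l <= k)%N by rewrite /l; lia.
have gap_ge0 : 0 <= fr f r - fstar by rewrite subr_ge0; exact: fstar_le_fr_Ad_x 0.
have := ler_wpM2r gap_ge0 ratio_le; have := Ad_x_rate l_gt0.
have := fr_Ad_x_nonincreasing l_le; have := fstar_le_fr_Ad_x k.
change (fr f (x 0)) with (fr f r); lra.
Qed.

Lemma Ad_out_le_ceil nn z m : Ad_out f A r nn z m ->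
  nn <= (Num.ceil (4 * nbar))%:~R -> m%:R <= ((Num.ceil (4 * nbar))%:~R : R).
Proof.
case=> _ [_ [not_stop _]] nn_le.
have /Num.intArchimedean.natrP[k ceil_k] : 0 <= Num.ceil (4 * nbar).
  by rewrite ceil_ge0; have := nbar_ge_half; lra.
have k_ge : 4 * nbar <= k%:R by have := ceil_ge (4 * nbar); rewrite ceil_k mulrz_nat.
move: nn_le; rewrite ceil_k mulrz_nat ler_nat leqNgt => nn_le; apply/negP => k_lt.
apply: (not_stop k); last exact: Ad_stop_beyond.
by rewrite k_lt andbT -(ltr_nat R); have := nbar_ge_half; lra.
Qed.

Lemma Ad_out_spec nn z m : Ad_out f A r nn z m ->
  [/\ (f z <= f r - ((2 * Lf)^-1 * dualnorm N (g r) ^+ 2)%:E)%E,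
      (f z - fstar%:E <= ((nbar / (m%:R + 1)) ^+ 2)%:E * (f r - fstar%:E))%E,
      nn <= m%:R &
      (nn <= (Num.ceil (4 * nbar))%:~R -> m%:R <= ((Num.ceil (4 * nbar))%:~R : R))].
Proof.
move=> out; have [m_ge1 [[nn_le _] [_ z_def]]] := out.
split => //; last exact: Ad_out_le_ceil out; rewrite z_def.
- have [first_step _] := descent_rate start_lt_pinfty; apply: le_trans first_step.
  exact: le_trans (Ad_x_nonincreasing f A r m_ge1) (Ad_x_le_A f A r 0).
- by rewrite Ad_x_fine start_fine -!EFinB -EFinM lee_fin; exact: Ad_x_rate.
Qed.

End Restart.

Section AstarRun.
Variables (z0 : 'rV[R]_n) (eps : R) (z : nat -> 'rV[R]_n) (m : nat -> nat).
Variables (s nn : nat -> R) (jout : nat).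
Hypothesis z0_sublevel : (f z0 - fstar%:E <= rho%:E)%E.
Hypothesis eps_gt0 : 0 < eps.
Hypothesis run : Astar_run f A z0 eps z m s nn jout.

Lemma Astar_step j : (j <= jout)%N -> Ad_out f A (z j) (nn j) (z j.+1) (m j.+1).
Proof. by case: run => _ _ step _ _ /step[_ []]. Qed.

Lemma Astar_m_le_nn j : (j <= jout)%N -> (m j)%:R <= nn j.
Proof. by case: run => _ _ step _ _ /step[_ [-> _]]; rewrite le_max lexx. Qed.

Lemma Astar_sublevel j : (j <= jout.+1)%N -> (f (z j) - fstar%:E <= rho%:E)%E.
Proof.
case: run => z_0 _ _ _ _; elim: j => [|j IH] j_le; first by rewrite z_0.
apply: le_trans (IH (ltnW j_le)); apply: leeB (lexx _).
exact: Ad_out_le_start (Astar_step j_le).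
Qed.

Lemma Astar_fine j : (j <= jout.+1)%N -> f (z j) = (fr f (z j))%:E.
Proof. by move=> j_le; exact: EFin_fine_sublevel (fstar_le _) (Astar_sublevel j_le). Qed.

Lemma fr_Astar_leS j : (j <= jout)%N -> fr f (z j.+1) <= fr f (z j).
Proof.
move=> j_le; have := Ad_out_le_start (Astar_step j_le).
by rewrite (Astar_fine (leqW j_le)) (Astar_fine (j := j.+1) j_le) lee_fin.
Qed.

Lemma Astar_s_in01 j : (2 <= j <= jout)%N -> 0 < s j <= 1.
Proof.
case/andP => j_ge2 j_le; case: run => _ _ step gap _.
have [-> _] := step j j_le; rewrite j_ge2.
case: j j_ge2 j_le => [|[|j]] // _ j_le /=.
apply: sqrt_ratio_gt0_le1; last exact: fr_Astar_leS (ltnW (ltnW j_le)).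
by rewrite -subr_gt0; exact: lt_trans eps_gt0 (gap j.+1 j_le).
Qed.

End AstarRun.

End AdGuarantee.

Theorem mainTheorem3 (R : realType) (n : nat)
  (f : 'rV[R]_n -> \bar R) (N : 'rV[R]_n -> R) (fstar : R)
  (xbar : 'rV[R]_n -> 'rV[R]_n) (A : 'rV[R]_n -> nat -> 'rV[R]_n)
  (mu : R -> R) (af Lf : R) (g : 'rV[R]_n -> 'rV[R]_n)
  (rho : R) (z0 : 'rV[R]_n) (eps : R)
  (z : nat -> 'rV[R]_n) (m : nat -> nat) (s nn : nat -> R) (jout : nat) :
  (* f proper closed convex *)
  proper_fun f -> closed_fun f -> convex_fun f ->
  (* f^* = min f is attained *)
  (exists x, f x = fstar%:E) -> (forall x, (fstar%:E <= f x)%E) ->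
  (* the norm and the projection xbar = argmin_{z in Omega_f} ||x - z|| *)
  is_norm N ->
  (forall x, f (xbar x) = fstar%:E /\
     forall y, f y = fstar%:E -> N (x - xbar x) <= N (x - y)) ->
  (* the algorithm A *)
  (forall x, A x 0%N = x) ->
  (* Assumption (A)(i) *)
  (forall r, 0 < r -> 0 < mu r /\
     forall x, (f x - fstar%:E <= r%:E)%E ->
       ((mu r / 2 * N (x - xbar x) ^+ 2)%:E <= f x - fstar%:E)%E) ->
  (* Assumption (A)(ii) *)
  0 < af -> 0 < Lf ->
  (forall x, g x = 0 <-> f x = fstar%:E) ->
  (forall x, (f x < +oo)%E ->
     (f (A x 1%N) <= f x - ((2 * Lf)^-1 * dualnorm N (g x) ^+ 2)%:E)%E /\
     (forall k, (1 <= k)%N ->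
        (f (A x k) - fstar%:E
           <= (af / (k%:R + 1) ^+ 2 * N (x - xbar x) ^+ 2)%:E)%E)) ->
  (* data of the theorem *)
  0 < rho -> (f z0 - fstar%:E <= rho%:E)%E -> 0 < eps ->
  Astar_run f A z0 eps z m s nn jout ->
  let nbar := Num.max (2^-1) (Num.sqrt (2 * af / mu rho)) in
  (* (i) *)
  (forall j, (j <= jout)%N ->
     (f (z j) - fstar%:E <= rho%:E)%E /\
     (f (z j.+1) <= f (z j) - ((2 * Lf)^-1 * dualnorm N (g (z j)) ^+ 2)%:E)%E /\
     (f (z j.+1) - fstar%:E
        <= ((nbar / ((m j.+1)%:R + 1)) ^+ 2)%:E * (f (z j) - fstar%:E))%E /\
     (0 < nn j <= ((Num.ceil (4 * nbar))%:~R : R) ->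
        nn j <= (m j.+1)%:R <= ((Num.ceil (4 * nbar))%:~R : R))) /\
  (* (ii) *)
  (forall j, (j <= jout)%N ->
     (m j <= m j.+1)%N /\ (m j)%:R <= nn j <= (m j.+1)%:R) /\
  (* (iii) *)
  (forall j, (2 <= j <= jout)%N -> 0 < s j <= 1).
Proof.
move=> _ _ _ _ fstar_le _ _ _ growth af_gt0 _ _ descent rho_gt0 z0_sub eps_gt0 run nbar.
have sub j (j_le : (j <= jout.+1)%N) := Astar_sublevel z0_sub run j_le.
have spec j (j_le : (j <= jout)%N) := Ad_out_spec fstar_le growth af_gt0 descent
  rho_gt0 (sub j (leqW j_le)) (Astar_step run j_le).
split; [|split].
- move=> j j_le; have [descent_step rate nn_le m_le_ceil] := spec j j_le.
  split; first exact: sub j (leqW j_le).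
  by do 2 split => //; case/andP => _ /m_le_ceil ->; rewrite nn_le.
- move=> j j_le; have [_ _ nn_le _] := spec j j_le.
  have m_le := Astar_m_le_nn run j_le.
  by split; [rewrite -(ler_nat R); exact: le_trans m_le nn_le | rewrite m_le nn_le].
- exact (Astar_s_in01 fstar_le z0_sub eps_gt0 run).
Qed.
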